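(* In the general setting described in the context, let $\mathcal X=\{x_{n,k}\}$ be a Marcinkiewicz–Zygmund family for $M$ with weights $\tau_{n,k}$, constants $A,B$, and condition number $\kappa=B/A$. Let $\sigma>\sigma_{\mathrm{crit}}$, $f\in H^\sigma(M)$, and for $n\in\mathbb N$ let $p_n=\operatorname{argmin}_{p\in\mathcal P_n}\sum_{k=1}^{L_n}|f(x_{n,k})-p(x_{n,k})|^2\tau_{n,k}$. Then $$\|f-p_n\|_2\le\sqrt{1+\kappa^2}\,\|f\|_{H^\sigma}\,\phi_\sigma(n).$$
   Context: $M$ is a compact space, $\mu$ a probability measure on $M$, $\langle f,g\rangle=\int_Mf\bar g\,d\mu$, $\|\cdot\|_2$ the $L^2(M,\mu)$-norm. $\{\phi_k:k\in\mathbb N\}$ is an orthonormal basis of $L^2(M,\mu)$ of continuous functions with $\phi_1\equiv1$; $\hat f(k)=\langle f,\phi_k\rangle$. $(\lambda_k)$ is non-decreasing, $\lambda_k\ge0$, $\lambda_k\to\infty$. $H^\sigma(M)=\{f:\|f\|_{H^\sigma}^2=\sum_k|\hat f(k)|^2(1+\lambda_k^2)^\sigma<\infty\}$. $\mathcal P_n=\operatorname{span}\{\phi_k:\lambda_k\le n\}$. There is $\sigma_{\mathrm{crit}}$ such that $C_\sigma^2=\sup_{x\in M}\sum_k|\phi_k(x)|^2(1+\lambda_k^2)^{-\sigma}<\infty$ for all $\sigma>\sigma_{\mathrm{crit}}$ (so $H^\sigma(M)\subseteq C(M)$ for such $\sigma$). $\phi_\sigma(n)=\sup_{x\in M}\big(\sum_{k:\lambda_k>n}|\phi_k(x)|^2(1+\lambda_k^2)^{-\sigma}\big)^{1/2}$.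 A Marcinkiewicz–Zygmund family is $\{x_{n,k}:n\in\mathbb N,k=1,\dots,L_n\}\subseteq M$ with weights $\tau_{n,k}>0$ and constants $A,B>0$ independent of $n$ such that $A\|p\|_2^2\le\sum_{k=1}^{L_n}|p(x_{n,k})|^2\tau_{n,k}\le B\|p\|_2^2$ for all $p\in\mathcal P_n$. *)

From HB Require Import structures.
From mathcomp Require Import all_boot all_order all_algebra.
From mathcomp Require Import all_classical all_reals all_analysis.
From mathcomp Require Import complex.

Set Implicit Arguments.
Unset Strict Implicit.
Unset Printing Implicit Defensive.

Import Order.TTheory GRing.Theory Num.Theory numFieldNormedType.Exports.
Local Open Scope ring_scope.
Local Open Scope classical_set_scope.

Definition Borel (M : ptopologicalType) := g_sigma_algebraType (@open M).

Section Setting.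
Variables (R : realType) (M : ptopologicalType).
Variable (mu : probability (Borel M) R).

Definition cnorm2 (z : R[i]) : R := complex.Re z ^+ 2 + complex.Im z ^+ 2.

Definition L2 (f : M -> R[i]) : Prop :=
  [/\ measurable_fun setT (fun x : Borel M => complex.Re (f x)),
      measurable_fun setT (fun x : Borel M => complex.Im (f x)) &
      mu.-integrable setT (fun x : Borel M => (cnorm2 (f x))%:E)].

Definition norm2 (f : M -> R[i]) : R :=
  Num.sqrt (Rintegral mu setT (fun x : Borel M => cnorm2 (f x))).

Definition inner (f g : M -> R[i]) : R[i] :=
  (Rintegral mu setT (fun x : Borel M => complex.Re (f x * (g x)^*)) +i*
   Rintegral mu setT (fun x : Borel M => complex.Im (f x * (g x)^*)))%C.

Definition fhat (phi : nat -> M -> R[i]) (f : M -> R[i]) (k : nat) : R[i] :=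
  inner f (phi k).

(* {phi_k} is an orthonormal basis of L^2(M, mu) of continuous functions, with
   the first element (index 0 here, phi_1 in the paper) constantly 1. *)
Definition ONB (phi : nat -> M -> R[i]) : Prop :=
  [/\ (forall k, continuous (fun x : M => complex.Re (phi k x)) /\
                 continuous (fun x : M => complex.Im (phi k x))),
      (forall j k, inner (phi j) (phi k) = (j == k)%:R),
      (forall f, L2 f ->
         (fun N => norm2 (fun x => f x - \sum_(k < N) fhat phi f k * phi k x))
           @ \oo --> 0) &
      (forall x, phi 0%N x = 1)].

Definition eigen_ok (lam : nat -> R) : Prop :=
  [/\ {homo lam : j k / (j <= k)%N >-> j <= k},
      (forall k, 0 <= lam k) &
      lam @ \oo --> +oo].

Definition wgt (lam : nat -> R) (s : R) (k : nat) : R := powR (1 + lam k ^+ 2) s.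

Definition Hseries (phi : nat -> M -> R[i]) (lam : nat -> R) (s : R)
  (f : M -> R[i]) : R ^nat :=
  series (fun k => cnorm2 (fhat phi f k) * wgt lam s k).

Definition inH (phi : nat -> M -> R[i]) (lam : nat -> R) (s : R)
  (f : M -> R[i]) : Prop :=
  L2 f /\ cvgn (Hseries phi lam s f).

Definition Hnorm (phi : nat -> M -> R[i]) (lam : nat -> R) (s : R)
  (f : M -> R[i]) : R :=
  Num.sqrt (limn (Hseries phi lam s f)).

(* f is the (continuous) H^sigma-representative: f(x) = sum_k \hat f(k) phi_k(x)
   for every x (this is the identification H^sigma(M) \subseteq C(M)). *)
Definition series_rep (phi : nat -> M -> R[i]) (f : M -> R[i]) : Prop :=
  forall x,
    (fun N => complex.Re (\sum_(k < N) fhat phi f k * phi k x)) @ \oo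
      --> complex.Re (f x) /\
    (fun N => complex.Im (\sum_(k < N) fhat phi f k * phi k x)) @ \oo
      --> complex.Im (f x).

End Setting.

Section Kernel.
Variables (R : realType) (M : ptopologicalType).

(* C_sigma^2 = sup_x sum_k |phi_k(x)|^2 (1 + lambda_k^2)^(-sigma) < oo
   (the terms are non-negative, so this is: the partial sums are bounded
   uniformly in x). *)
Definition Csig_finite (phi : nat -> M -> R[i]) (lam : nat -> R) (s : R) : Prop :=
  exists C : R, forall (x : M) (N : nat),
    \sum_(k < N) cnorm2 (phi k x) * wgt lam (- s) k <= C.

Definition tail_sum (phi : nat -> M -> R[i]) (lam : nat -> R) (s : R)
  (n : nat) (x : M) : R :=
  limn (series (fun k => if n%:R < lam k
                         then cnorm2 (phi k x) * wgt lam (- s) k else 0)).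

Definition phi_sigma (phi : nat -> M -> R[i]) (lam : nat -> R) (s : R)
  (n : nat) : R :=
  sup [set Num.sqrt (tail_sum phi lam s n x) | x in [set: M]].

Definition inP (phi : nat -> M -> R[i]) (lam : nat -> R) (n : nat)
  (p : M -> R[i]) : Prop :=
  exists (N : nat) (c : nat -> R[i]),
    forall x, p x = \sum_(k < N | lam k <= n%:R) c k * phi k x.

(* weighted squared sampling error sum_{k} |f(x_{n,k}) - p(x_{n,k})|^2 tau_{n,k}
   (the paper's k = 1..L_n is k = 0..L_n - 1 here) *)
Definition sq_err (L : nat -> nat) (X : nat -> nat -> M) (tau : nat -> nat -> R)
  (n : nat) (f p : M -> R[i]) : R :=
  \sum_(k < L n) cnorm2 (f (X n k) - p (X n k)) * tau n k.

End Kernel.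

Definition is_MZ (R : realType) (M : ptopologicalType)
  (mu : probability (Borel M) R) (phi : nat -> M -> R[i]) (lam : nat -> R)
  (L : nat -> nat) (X : nat -> nat -> M) (tau : nat -> nat -> R) (A B : R) : Prop :=
  [/\ 0 < A, 0 < B,
      (forall n k, (k < L n)%N -> 0 < tau n k) &
      (forall n p, inP phi lam n p ->
         A * norm2 mu p ^+ 2 <= \sum_(k < L n) cnorm2 (p (X n k)) * tau n k
         <= B * norm2 mu p ^+ 2)].

Definition is_lsq (R : realType) (M : ptopologicalType) (phi : nat -> M -> R[i])
  (lam : nat -> R) (L : nat -> nat) (X : nat -> nat -> M) (tau : nat -> nat -> R)
  (n : nat) (f p : M -> R[i]) : Prop :=
  inP phi lam n p /\
  forall q, inP phi lam n q -> sq_err L X tau n f p <= sq_err L X tau n f q.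

(* Let q be the Fourier partial sum of f over the indices with lam_k <= n.
   Cauchy-Schwarz with the weights (1 + lam_k^2)^(+-sigma) bounds |f - q| pointwise
   by ||f||_{H^sigma} phi_sigma(n), and f - q is orthogonal to P_n.  Since p minimises
   the discrete error over P_n, f - p is discretely orthogonal to q - p, so the
   discrete norm of q - p is at most that of f - q, hence at most
   B ||f||^2 phi_sigma(n)^2 (the upper MZ inequality for phi_1 = 1 bounds the total
   weight by B).  The lower MZ inequality turns this into
   ||q - p||^2 <= kappa ||f||^2 phi_sigma(n)^2, and Pythagoras for
   f - p = (f - q) + (q - p) concludes. *)

From HB Require Import structures.
From mathcomp Require Import all_boot all_order all_algebra.
From mathcomp Require Import all_classical all_reals all_analysis.
From mathcomp Require Import complex.
From mathcomp Require Import lra ring measurable_realfun.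

Set Implicit Arguments.
Unset Strict Implicit.
Unset Printing Implicit Defensive.

Import Order.TTheory GRing.Theory Num.Theory numFieldNormedType.Exports.
Local Open Scope ring_scope.
Local Open Scope classical_set_scope.

Local Notation normc := ComplexField.Normc.normc.

Section ComplexNorm.
Variable R : realType.
Implicit Types z w : R[i].

Lemma Re_mul z w :
  complex.Re (z * w) = complex.Re z * complex.Re w - complex.Im z * complex.Im w.
Proof. by case: z => a b; case: w. Qed.

Lemma Im_mul z w :
  complex.Im (z * w) = complex.Re z * complex.Im w + complex.Im z * complex.Re w.
Proof. by case: z => a b; case: w. Qed.

Lemma Re_conj z : complex.Re z^*%C = complex.Re z.
Proof. by case: z. Qed.

Lemma Im_conj z : complex.Im z^*%C = - complex.Im z.
Proof. by case: z. Qed.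

Lemma cnorm2_ge0 z : 0 <= cnorm2 z.
Proof. by rewrite addr_ge0 ?sqr_ge0. Qed.

Lemma cnorm20 : cnorm2 (0 : R[i]) = 0.
Proof. by rewrite /cnorm2 /= expr0n addr0. Qed.

Lemma cnorm21 : cnorm2 (1 : R[i]) = 1.
Proof. by rewrite /cnorm2 /= expr1n expr0n addr0. Qed.

Lemma cnorm2E z : cnorm2 z = normc z ^+ 2.
Proof. by case: z => a b; rewrite sqr_sqrtr ?addr_ge0 ?sqr_ge0. Qed.

Lemma cnorm2M z w : cnorm2 (z * w) = cnorm2 z * cnorm2 w.
Proof. by rewrite !cnorm2E ComplexField.Normc.normcM exprMn. Qed.

Lemma Re_mulJ z : complex.Re (z * z^*)%C = cnorm2 z.
Proof. by case: z => a b; rewrite /cnorm2 /=; ring. Qed.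

Lemma cnorm2_subZ z w (t : R) :
  cnorm2 (z - t%:C%C * w) =
  cnorm2 z - 2 * t * complex.Re (z * w^*)%C + t ^+ 2 * cnorm2 w.
Proof. by case: z => a b; case: w => c d; rewrite /cnorm2 /=; ring. Qed.

Lemma cnorm2D_le z w : cnorm2 (z + w) <= 2 * (cnorm2 z + cnorm2 w).
Proof.
case: z => a b; case: w => c d; rewrite /cnorm2 /=.
by have := sqr_ge0 (a - c); have := sqr_ge0 (b - d); nra.
Qed.

Lemma normr_Re_mulJ_le z w : `|complex.Re (z * w^*)%C| <= cnorm2 z + cnorm2 w.
Proof.
case: z => a b; case: w => c d; rewrite /cnorm2 /= ler_norml.
have := sqr_ge0 (a - c); have := sqr_ge0 (b - d).
have := sqr_ge0 (a + c); have := sqr_ge0 (b + d).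
move=> *; apply/andP; split; nra.
Qed.

Lemma normr_Im_mulJ_le z w : `|complex.Im (z * w^*)%C| <= cnorm2 z + cnorm2 w.
Proof.
case: z => a b; case: w => c d; rewrite /cnorm2 /= ler_norml.
have := sqr_ge0 (a - d); have := sqr_ge0 (b - c).
have := sqr_ge0 (a + d); have := sqr_ge0 (b + c).
move=> *; apply/andP; split; nra.
Qed.

Lemma normc_sum_mul_le I (r : seq I) (P : pred I) (a b : I -> R[i]) :
  normc (\sum_(i <- r | P i) a i * b i) <= \sum_(i <- r | P i) normc (a i) * normc (b i).
Proof.
elim/big_rec2: _ => [|i y1 y2 _ IH]; first by rewrite ComplexField.Normc.normc0.
by rewrite (le_trans (le_normcD _ _)) // ComplexField.Normc.normcM lerD2l.
Qed.

End ComplexNorm.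

Lemma discriminant_le (R : realFieldType) (a b c : R) : 0 <= a ->
  (forall t, 0 <= a * t ^+ 2 - 2 * b * t + c) -> b ^+ 2 <= a * c.
Proof.
move=> a_ge0 quad_ge0; have [a0|a_neq0] := eqVneq a 0.
  rewrite a0 mul0r; have [->|b_neq0] := eqVneq b 0; first by rewrite expr0n.
  have := quad_ge0 ((c + 1) / (2 * b)); rewrite a0.
  have -> : 0 * ((c + 1) / (2 * b)) ^+ 2 - 2 * b * ((c + 1) / (2 * b)) + c = - 1.
    by field; rewrite b_neq0.
  by rewrite oppr_ge0 ler10.
have a_gt0 : 0 < a by rewrite lt0r a_neq0.
have := quad_ge0 (b / a).
have -> : a * (b / a) ^+ 2 - 2 * b * (b / a) + c = c - b ^+ 2 / a by field.
by rewrite subr_ge0 ler_pdivrMr // mulrC.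
Qed.

Lemma ler_sqrtM_of_sqr (R : rcfType) (x k h s : R) :
  0 <= x -> 0 <= k -> 0 <= h -> 0 <= s -> x ^+ 2 <= k * (h * s ^+ 2) ->
  x <= Num.sqrt k * Num.sqrt h * s.
Proof.
move=> x_ge0 k_ge0 h_ge0 s_ge0 sqr_le.
rewrite -ler_sqr ?nnegrE ?mulr_ge0 ?sqrtr_ge0 //.
by rewrite 2!exprMn !sqr_sqrtr // -mulrA.
Qed.

Lemma weighted_Cauchy_Schwarz (R : realFieldType) I (r : seq I) (P : pred I)
    (x y w : I -> R) : (forall i, P i -> 0 < w i) ->
  (\sum_(i <- r | P i) x i * y i) ^+ 2 <=
  (\sum_(i <- r | P i) x i ^+ 2 * w i) * \sum_(i <- r | P i) y i ^+ 2 / w i.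
Proof.
move=> w_gt0; apply: discriminant_le => [|t].
  by apply: sumr_ge0 => i /w_gt0/ltW wi_ge0; rewrite mulr_ge0 ?sqr_ge0.
have -> : (\sum_(i <- r | P i) x i ^+ 2 * w i) * t ^+ 2
    - 2 * (\sum_(i <- r | P i) x i * y i) * t + \sum_(i <- r | P i) y i ^+ 2 / w i
  = \sum_(i <- r | P i) w i * (t * x i - y i / w i) ^+ 2.
  rewrite -mulrA !mulr_suml mulr_sumr -sumrN -!big_split /=.
  by apply: eq_bigr => i /w_gt0 /lt0r_neq0 wi_neq0; field.
by apply: sumr_ge0 => i /w_gt0/ltW wi_ge0; rewrite mulr_ge0 ?sqr_ge0.
Qed.

Lemma cnorm2_sum_mul_le (R : realType) I (r : seq I) (P : pred I) (a b : I -> R[i])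
    (w : I -> R) : (forall i, P i -> 0 < w i) ->
  cnorm2 (\sum_(i <- r | P i) a i * b i) <=
  (\sum_(i <- r | P i) cnorm2 (a i) * w i) * \sum_(i <- r | P i) cnorm2 (b i) / w i.
Proof.
move=> w_gt0; rewrite cnorm2E.
rewrite (eq_bigr (fun i => normc (a i) ^+ 2 * w i)) => [|i _]; last by rewrite (cnorm2E (a i)).
rewrite [X in _ * X](eq_bigr (fun i => normc (b i) ^+ 2 / w i)) => [|i _]; last by rewrite (cnorm2E (b i)).
apply: le_trans
  (weighted_Cauchy_Schwarz r (fun i => normc (a i)) (fun i => normc (b i)) w_gt0).
rewrite lerXn2r ?nnegrE ?normc_sum_mul_le //.
  by case: (\sum_(i <- r | P i) a i * b i) => u v; apply: sqrtr_ge0.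
by apply: sumr_ge0 => i _; rewrite mulr_ge0 //; [case: (a i) | case: (b i)] => u v; apply: sqrtr_ge0.
Qed.

Section NonnegSeries.
Variables (R : realType) (u : R ^nat).
Hypothesis u_ge0 : forall k, 0 <= u k.

Lemma nondecreasing_series_ge0 : nondecreasing_seq (series u).
Proof. by apply/nondecreasing_seqP => k; rewrite seriesSr lerDl. Qed.

Lemma series_le_limn : cvgn (series u) -> forall N, series u N <= limn (series u).
Proof. exact: nondecreasing_cvgn_le nondecreasing_series_ge0. Qed.

Lemma limn_series_ge0 : cvgn (series u) -> 0 <= limn (series u).
Proof. by move/series_le_limn/(_ 0%N); rewrite /series /= big_geq. Qed.

Lemma bounded_series_cvgn (C : R) : (forall N, series u N <= C) ->
  cvgn (series u) /\ limn (series u) <= C.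
Proof.
move=> le_C; have cvg_u : cvgn (series u).
  by apply: nondecreasing_is_cvgn nondecreasing_series_ge0 _; exists C => _ [N _ <-].
by split => //; apply: limr_le => //; apply: nearW.
Qed.

Lemma sum_ord_le_limn (Q : pred nat) N : cvgn (series u) ->
  \sum_(k < N | Q k) u k <= limn (series u).
Proof.
move=> cvg_u; apply: le_trans (series_le_limn cvg_u N).
rewrite seriesEord /= [leRHS](bigID (fun k : 'I_N => Q k)) /= lerDl.
by apply: sumr_ge0.
Qed.

End NonnegSeries.

Section L2Space.
Variables (R : realType) (M : ptopologicalType) (mu : probability (Borel M) R).
Implicit Types (u v w : M -> R[i]) (g h : M -> R).

Definition measurableR h := measurable_fun [set: Borel M] (h : Borel M -> R).
Definition integrableR h := mu.-integrable [set: Borel M] (fun x => (h x)%:E).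
Definition cmeasurable u :=
  measurableR (fun x => complex.Re (u x)) /\ measurableR (fun x => complex.Im (u x)).

Lemma continuous_measurableR h : continuous h -> measurableR h.
Proof.
move=> /continuousP h_cont; apply: (measurability _ (RGenOpens.measurableE R)).
move=> _ [_ [a [b ->] <-]]; rewrite setTI; apply: sub_sigma_algebra.
exact/h_cont/interval_open.
Qed.

Lemma cmeasurableD u v : cmeasurable u -> cmeasurable v -> cmeasurable (u \+ v).
Proof.
move=> [uRe uIm] [vRe vIm]; split; rewrite /measurableR.
  by under eq_fun do rewrite raddfD; exact: measurable_funD.
by under eq_fun do rewrite raddfD; exact: measurable_funD.
Qed.

Lemma cmeasurableM u v : cmeasurable u -> cmeasurable v -> cmeasurable (u \* v).
Proof.
move=> [uRe uIm] [vRe vIm]; split; rewrite /measurableR.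
  under eq_fun do rewrite Re_mul.
  by apply: measurable_funB; apply: measurable_funM.
under eq_fun do rewrite Im_mul.
by apply: measurable_funD; apply: measurable_funM.
Qed.

Lemma cmeasurableJ u : cmeasurable u -> cmeasurable (fun x => (u x)^*)%C.
Proof.
move=> [uRe uIm]; split; rewrite /measurableR.
  by under eq_fun do rewrite Re_conj.
by under eq_fun do rewrite Im_conj; exact: measurable_funN.
Qed.

Lemma cmeasurable_cst c : cmeasurable (fun _ => c).
Proof. by split; exact: measurable_cst. Qed.

Lemma measurableR_cnorm2 u : cmeasurable u -> measurableR (fun x => cnorm2 (u x)).
Proof. by move=> [uRe uIm]; apply: measurable_funD; apply: measurable_funX. Qed.

Lemma integrableR_le g h :
  measurableR h -> integrableR g -> (forall x, `|h x| <= g x) -> integrableR h.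
Proof.
move=> h_meas g_int h_le; apply: le_integrable g_int => //=.
  exact/measurable_EFinP.
by move=> x _ /=; rewrite lee_fin (le_trans (h_le x)) // ler_norm.
Qed.

Lemma integrableR_cst (c : R) : integrableR (fun _ => c).
Proof. exact: (finite_measure_integrable_cst mu c measurableT). Qed.

Lemma integrableRD g h : integrableR g -> integrableR h -> integrableR (g \+ h).
Proof. by move=> g_int h_int; apply: eq_integrable (integrableD _ g_int h_int). Qed.

Lemma integrableRZ (c : R) h : integrableR h -> integrableR (fun x => c * h x).
Proof. by move=> h_int; apply: eq_integrable (integrableZl _ c h_int). Qed.

(* [fine +oo = 0], so a nonzero value of [Rintegral] certifies integrability. *)
Lemma integrableR_Rintegral_neq0 h : measurableR h -> (forall x, 0 <= h x) ->
  Rintegral mu setT h != 0 -> integrableR h.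
Proof.
move=> h_meas h_ge0 int_neq0; apply/integrableP; split; first exact/measurable_EFinP.
rewrite ltey; apply: contra int_neq0 => /eqP int_oo; apply/eqP.
rewrite /Rintegral (eq_integral (fun x : Borel M => `|(h x)%:E|)%E) ?int_oo // => x _.
by rewrite gee0_abs // lee_fin.
Qed.

Lemma L2P u : L2 mu u <-> cmeasurable u /\ integrableR (fun x => cnorm2 (u x)).
Proof. by split => [[? ? ?]|[[? ?] ?]]. Qed.

Lemma L2_cst c : L2 mu (fun _ => c).
Proof. by apply/L2P; split; [exact: cmeasurable_cst | exact: integrableR_cst]. Qed.

Lemma L2D u v : L2 mu u -> L2 mu v -> L2 mu (u \+ v).
Proof.
move=> /L2P[u_meas u_int] /L2P[v_meas v_int]; apply/L2P; split.
  exact: cmeasurableD.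
apply: (integrableR_le (g := fun x => 2 * (cnorm2 (u x) + cnorm2 (v x)))).
- exact: measurableR_cnorm2 (cmeasurableD u_meas v_meas).
- exact: integrableRZ (integrableRD u_int v_int).
- by move=> x; rewrite ger0_norm ?cnorm2_ge0 ?cnorm2D_le.
Qed.

Lemma L2Z c u : L2 mu u -> L2 mu (fun x => c * u x).
Proof.
move=> /L2P[u_meas u_int]; apply/L2P; split.
  exact: (cmeasurableM (cmeasurable_cst c)).
by under eq_fun do rewrite cnorm2M; exact: integrableRZ.
Qed.

Lemma L2B u v : L2 mu u -> L2 mu v -> L2 mu (fun x => u x - v x).
Proof.
move=> u_L2 v_L2; have -> : (fun x => u x - v x) = u \+ (fun x => -1 * v x).
  by apply: funext => x /=; rewrite mulN1r.
exact: L2D u_L2 (L2Z (-1) v_L2).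
Qed.

Lemma L2_sum I (r : seq I) (P : pred I) (F : I -> M -> R[i]) :
  (forall i, L2 mu (F i)) -> L2 mu (fun x => \sum_(i <- r | P i) F i x).
Proof.
move=> F_L2; elim: r => [|i r IH].
  by under eq_fun do rewrite big_nil; exact: L2_cst.
under eq_fun do rewrite big_cons; case: (P i) => //.
exact: L2D.
Qed.

Definition cintegrable u :=
  integrableR (fun x => complex.Re (u x)) /\ integrableR (fun x => complex.Im (u x)).

Definition cintegral u : R[i] :=
  (Rintegral mu setT (fun x => complex.Re (u x)) +i*
   Rintegral mu setT (fun x => complex.Im (u x)))%C.

Lemma L2_cintegrable_mulJ u v : L2 mu u -> L2 mu v ->
  cintegrable (fun x => u x * (v x)^*)%C.
Proof.
move=> /L2P[u_meas u_int] /L2P[v_meas v_int].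
have [mRe mIm] := cmeasurableM u_meas (cmeasurableJ v_meas).
have uv_int := integrableRD u_int v_int.
split; apply: (integrableR_le _ uv_int) => // x.
  exact: normr_Re_mulJ_le.
exact: normr_Im_mulJ_le.
Qed.

Lemma cintegralD u v : cintegrable u -> cintegrable v ->
  cintegral (u \+ v) = cintegral u + cintegral v.
Proof.
move=> [uRe uIm] [vRe vIm]; rewrite /cintegral.
under eq_Rintegral do rewrite raddfD.
under [X in (_ +i* X)%C]eq_Rintegral do rewrite raddfD.
by rewrite !RintegralD.
Qed.

Lemma cintegralZ c u : cintegrable u ->
  cintegral (fun x => c * u x) = c * cintegral u.
Proof.
move=> [uRe uIm]; rewrite /cintegral.
under eq_Rintegral do rewrite Re_mul.
under [X in (_ +i* X)%C]eq_Rintegral do rewrite Im_mul.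
rewrite RintegralB ?RintegralD ?RintegralZl //; try exact: integrableRZ.
by case: c => a b; apply/eqP; rewrite eq_complex /= !eqxx.
Qed.

Lemma cintegralJ u : cintegrable u -> cintegral (fun x => (u x)^*)%C = (cintegral u)^*%C.
Proof.
move=> [uRe uIm]; rewrite /cintegral.
under eq_Rintegral do rewrite Re_conj.
under [X in (_ +i* X)%C]eq_Rintegral do rewrite Im_conj.
congr (_ +i* _)%C; rewrite -mulN1r -RintegralZl //.
by apply: eq_Rintegral => x _; rewrite mulN1r.
Qed.

Lemma innerE u v : inner mu u v = cintegral (fun x => u x * (v x)^*)%C.
Proof. by []. Qed.

Lemma innerDl u v w : L2 mu u -> L2 mu v -> L2 mu w ->
  inner mu (u \+ v) w = inner mu u w + inner mu v w.
Proof.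
move=> u_L2 v_L2 w_L2; rewrite !innerE -cintegralD; try exact: L2_cintegrable_mulJ.
by congr cintegral; apply: funext => x /=; rewrite mulrDl.
Qed.

Lemma innerZl c u w : L2 mu u -> L2 mu w ->
  inner mu (fun x => c * u x) w = c * inner mu u w.
Proof.
move=> u_L2 w_L2; rewrite !innerE -cintegralZ; last exact: L2_cintegrable_mulJ.
by congr cintegral; apply: funext => x; rewrite mulrA.
Qed.

Lemma inner_conj u w : L2 mu u -> L2 mu w -> inner mu u w = (inner mu w u)^*%C.
Proof.
move=> u_L2 w_L2; rewrite !innerE -cintegralJ; last exact: L2_cintegrable_mulJ.
congr cintegral; apply: funext => x.
by case: (u x) => a b; case: (w x) => c d; congr (_ +i* _)%C; ring.
Qed.

Lemma inner0l w : inner mu (fun _ => 0) w = 0.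
Proof.
rewrite innerE /cintegral.
under eq_Rintegral do rewrite mul0r.
under [X in (_ +i* X)%C]eq_Rintegral do rewrite mul0r.
by rewrite /= Rintegral_cst // mul0r.
Qed.

Lemma inner_suml I (r : seq I) (P : pred I) (c : I -> R[i]) (F : I -> M -> R[i]) w :
  (forall i, L2 mu (F i)) -> L2 mu w ->
  inner mu (fun x => \sum_(i <- r | P i) c i * F i x) w =
  \sum_(i <- r | P i) c i * inner mu (F i) w.
Proof.
move=> F_L2 w_L2; elim: r => [|i r IH].
  by under eq_fun do rewrite big_nil; rewrite big_nil inner0l.
under eq_fun do rewrite big_cons; rewrite big_cons; case: (P i) => //.
rewrite (innerDl (u := fun x => c i * F i x)) ?innerZl ?IH //.
- exact: L2Z.
- by apply: L2_sum => j; exact: L2Z.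
Qed.

Lemma norm2_ge0 u : 0 <= norm2 mu u.
Proof. exact: sqrtr_ge0. Qed.

Lemma sqr_norm2 u : norm2 mu u ^+ 2 = complex.Re (inner mu u u).
Proof.
rewrite sqr_sqrtr; last by apply: Rintegral_ge0 => x _; exact: cnorm2_ge0.
by apply: eq_Rintegral => x _; rewrite Re_mulJ.
Qed.

Lemma sqr_norm2_le u (C : R) : L2 mu u -> (forall x, cnorm2 (u x) <= C) ->
  norm2 mu u ^+ 2 <= C.
Proof.
move=> /L2P[_ u_int] u_le; rewrite sqr_sqrtr; last first.
  by apply: Rintegral_ge0 => x _; exact: cnorm2_ge0.
rewrite -[leRHS]mulr1 -[1](congr1 fine (probability_setT mu)) -Rintegral_cst //.
by apply: le_Rintegral => //; exact: integrableR_cst.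
Qed.

Lemma Pythagoras u v : L2 mu u -> L2 mu v -> inner mu u v = 0 ->
  norm2 mu (u \+ v) ^+ 2 = norm2 mu u ^+ 2 + norm2 mu v ^+ 2.
Proof.
move=> u_L2 v_L2 uv0; have uv_L2 := L2D u_L2 v_L2.
rewrite !sqr_norm2 innerDl // (inner_conj u_L2 uv_L2) (inner_conj v_L2 uv_L2).
by rewrite !innerDl // (inner_conj v_L2 u_L2) uv0 conjc0 addr0 add0r raddfD.
Qed.

Lemma Pythagoras_sub u v w : L2 mu u -> L2 mu v -> L2 mu w ->
  inner mu (fun x => u x - v x) (fun x => v x - w x) = 0 ->
  norm2 mu (fun x => u x - w x) ^+ 2 =
  norm2 mu (fun x => u x - v x) ^+ 2 + norm2 mu (fun x => v x - w x) ^+ 2.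
Proof.
move=> u_L2 v_L2 w_L2 uv_vw0.
rewrite -Pythagoras //; [|exact: L2B..].
by congr (norm2 mu _ ^+ 2); apply: funext => x /=; rewrite addrA subrK.
Qed.

End L2Space.

Section OrthonormalBasis.
Variables (R : realType) (M : ptopologicalType) (mu : probability (Borel M) R).
Variables (phi : nat -> M -> R[i]) (lam : nat -> R).
Hypothesis phi_ONB : ONB mu phi.

Lemma inner_phi j k : inner mu (phi j) (phi k) = (j == k)%:R.
Proof. by case: phi_ONB. Qed.

Lemma L2_phi k : L2 mu (phi k).
Proof.
have phi_meas : cmeasurable (phi k).
  by case: phi_ONB => /(_ k)[Re_cont Im_cont] _ _ _; split; exact: continuous_measurableR.
apply/L2P; split => //; apply: integrableR_Rintegral_neq0 => [|x|].
- exact: measurableR_cnorm2.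
- exact: cnorm2_ge0.
- rewrite -(eq_Rintegral _ (fun (x : Borel M) _ => Re_mulJ (phi k x))).
  by rewrite -[Rintegral _ _ _]/(complex.Re (inner mu (phi k) (phi k))) inner_phi eqxx oner_neq0.
Qed.

Lemma inP_L2 n q : inP phi lam n q -> L2 mu q.
Proof.
case=> N [c q_def]; rewrite (funext q_def).
by apply: L2_sum => k; exact/L2Z/L2_phi.
Qed.

Lemma inP_lincomb n a b u v : inP phi lam n u -> inP phi lam n v ->
  inP phi lam n (fun x => a * u x + b * v x).
Proof.
move=> [N1 [c1 u_def]] [N2 [c2 v_def]].
exists (N1 + N2)%N, (fun k => a * (if (k < N1)%N then c1 k else 0) +
                             b * (if (k < N2)%N then c2 k else 0)) => x.
pose P k := lam k <= n%:R; rewrite u_def v_def !mulr_sumr.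
rewrite (big_ord_widen_cond _ P (fun k => a * (c1 k * phi k x)) (leq_addr N2 N1)).
rewrite (big_ord_widen_cond _ P (fun k => b * (c2 k * phi k x)) (leq_addl N1 N2)).
rewrite !big_mkcondr -big_split /=.
by apply: eq_bigr => k _; case: ifP; case: ifP => _ _; ring.
Qed.

Lemma inP_sub n u v : inP phi lam n u -> inP phi lam n v ->
  inP phi lam n (fun x => u x - v x).
Proof.
move=> u_inP v_inP; have := inP_lincomb 1 (-1) u_inP v_inP.
by under eq_fun do rewrite mul1r mulN1r.
Qed.

Lemma inner_inP_eq0 n w q : L2 mu w ->
  (forall k, lam k <= n%:R -> inner mu w (phi k) = 0) ->
  inP phi lam n q -> inner mu w q = 0.
Proof.
move=> w_L2 w_orth q_inP; rewrite (inner_conj w_L2 (inP_L2 q_inP)).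
case: q_inP => N [c q_def]; rewrite (funext q_def) inner_suml //; last exact: L2_phi.
rewrite big1 ?conjc0 // => k lam_k.
by rewrite (inner_conj (L2_phi k) w_L2) w_orth // conjc0 mulr0.
Qed.

Lemma inP_eq0 n q : {homo lam : j k / (j <= k)%N >-> j <= k} -> n%:R < lam 0%N ->
  inP phi lam n q -> q = fun _ => 0.
Proof.
move=> lam_mono lam0_gt [N [c q_def]]; apply: funext => x.
rewrite q_def big1 // => k lam_k.
by have := lt_le_trans lam0_gt (lam_mono _ _ (leq0n k)); rewrite ltNge lam_k.
Qed.

Definition fourier_proj N n (f : M -> R[i]) x :=
  \sum_(k < N | lam k <= n%:R) fhat mu phi f k * phi k x.

Lemma fourier_proj_inP N n f : inP phi lam n (fourier_proj N n f).
Proof. by exists N, (fhat mu phi f). Qed.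

Lemma fourier_proj_orth N n f q : L2 mu f ->
  (forall k, (N <= k)%N -> n%:R < lam k) -> inP phi lam n q ->
  inner mu (fun x => f x - fourier_proj N n f x) q = 0.
Proof.
move=> f_L2 lam_gt; have proj_L2 := inP_L2 (fourier_proj_inP N n f).
apply: inner_inP_eq0 => [|j lam_j]; first exact: L2B.
have j_lt : (j < N)%N.
  by rewrite ltnNge; apply: contraTN lam_j => /lam_gt; rewrite -ltNge.
have -> : (fun x => f x - fourier_proj N n f x) =
          f \+ (fun x => -1 * fourier_proj N n f x).
  by apply: funext => x /=; rewrite mulN1r.
have phi_j_L2 := L2_phi j.
rewrite innerDl ?innerZl //; last exact: L2Z.
rewrite /fourier_proj inner_suml // => [|k]; last exact: L2_phi.
rewrite (bigD1 (Ordinal j_lt)) //= inner_phi eqxx mulr1 big1 => [|k /andP[_]].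
  by rewrite addr0 mulN1r subrr.
by rewrite -val_eqE inner_phi => /negbTE ->; rewrite mulr0.
Qed.

End OrthonormalBasis.

Lemma sumr_ord_widen_sub (V : zmodType) (F : nat -> V) (P : pred nat) N K :
  (forall k, (N <= k)%N -> ~~ P k) -> (N <= K)%N ->
  \sum_(k < K) F k - \sum_(k < N | P k) F k = \sum_(k < K | ~~ P k) F k.
Proof.
move=> notP_ge N_le; rewrite (bigID (fun k : 'I_K => P k)) /= (big_ord_widen_cond K P F N_le).
rewrite [X in _ - X](eq_bigl (fun k : 'I_K => P k)) => [|k]; first by rewrite addrAC subrr add0r.
by case: (ltnP k N) => [|/notP_ge/negbTE ->]; rewrite ?andbT ?andbF.
Qed.

Lemma wgt_gt0 (R : realType) (lam : nat -> R) s k : 0 < wgt lam s k.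
Proof. by apply: powR_gt0; rewrite ltr_pwDl ?sqr_ge0. Qed.

Lemma wgtN (R : realType) (lam : nat -> R) s k : wgt lam (- s) k = (wgt lam s k)^-1.
Proof. exact: powRN. Qed.

Lemma series_rep_cnorm2_cvg (R : realType) (M : ptopologicalType)
    (mu : probability (Borel M) R) (phi : nat -> M -> R[i]) f x c :
  series_rep mu phi f ->
  (fun K => cnorm2 (\sum_(k < K) fhat mu phi f k * phi k x - c)) @ \oo --> cnorm2 (f x - c).
Proof.
move=> /(_ x)[Re_cvg Im_cvg]; rewrite /cnorm2 !raddfB.
under eq_fun do rewrite !raddfB.
by apply: cvgD; rewrite expr2; under eq_fun do rewrite expr2;
  apply: cvgM; apply: cvgB => //; exact: cvg_cst.
Qed.

Section TailSums.
Variables (R : realType) (M : ptopologicalType) (phi : nat -> M -> R[i]) (lam : nat -> R).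
Variables (sigma C : R) (n : nat).
Hypothesis phi_sum_le : forall x N, \sum_(k < N) cnorm2 (phi k x) * wgt lam (- sigma) k <= C.

Let tail_term x k :=
  if n%:R < lam k then cnorm2 (phi k x) * wgt lam (- sigma) k else 0.

Let tail_term_ge0 x k : 0 <= tail_term x k.
Proof.
by rewrite /tail_term; case: ifP => // _; rewrite mulr_ge0 ?cnorm2_ge0 ?ltW ?wgt_gt0.
Qed.

Let tail_sum_facts x :
  cvgn (series (tail_term x)) /\ tail_sum phi lam sigma n x <= C.
Proof.
apply: bounded_series_cvgn => // N; rewrite seriesEord /= -big_mkcond.
apply: le_trans (phi_sum_le x N); rewrite [leRHS](bigID (fun k : 'I_N => n%:R < lam k)).
by rewrite lerDl sumr_ge0 // => k _; rewrite mulr_ge0 ?cnorm2_ge0 ?ltW ?wgt_gt0.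
Qed.

Lemma tail_sum_ge0 x : 0 <= tail_sum phi lam sigma n x.
Proof. exact: limn_series_ge0 (tail_term_ge0 x) (tail_sum_facts x).1. Qed.

Lemma sum_le_tail_sum x N :
  \sum_(k < N | n%:R < lam k) cnorm2 (phi k x) / wgt lam sigma k <= tail_sum phi lam sigma n x.
Proof.
rewrite (eq_bigr (fun k : 'I_N => tail_term x k)) => [|k lam_k]; last first.
  by rewrite /tail_term lam_k wgtN.
exact: (sum_ord_le_limn (tail_term_ge0 x) (fun k => n%:R < lam k) N (tail_sum_facts x).1).
Qed.

Lemma sqrt_tail_sum_le_phi_sigma x :
  Num.sqrt (tail_sum phi lam sigma n x) <= phi_sigma phi lam sigma n.
Proof.
apply: ub_le_sup; last by exists x.
by exists (Num.sqrt C) => _ [y _ <-]; rewrite ler_wsqrtr ?(tail_sum_facts y).2.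
Qed.

Lemma phi_sigma_ge0 : 0 <= phi_sigma phi lam sigma n.
Proof. exact: le_trans (sqrtr_ge0 _) (sqrt_tail_sum_le_phi_sigma point). Qed.

Lemma tail_sum_le_phi_sigma x :
  tail_sum phi lam sigma n x <= phi_sigma phi lam sigma n ^+ 2.
Proof.
rewrite -(sqr_sqrtr (tail_sum_ge0 x)) lerXn2r ?nnegrE ?sqrtr_ge0 ?phi_sigma_ge0 //.
exact: sqrt_tail_sum_le_phi_sigma.
Qed.

Variable mu : probability (Borel M) R.

Lemma fourier_tail_bound f N x :
  (forall k, (N <= k)%N -> n%:R < lam k) ->
  cvgn (Hseries mu phi lam sigma f) -> series_rep mu phi f ->
  cnorm2 (f x - fourier_proj mu phi lam N n f x)
    <= limn (Hseries mu phi lam sigma f) * tail_sum phi lam sigma n x.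
Proof.
move=> lam_gt H_cvg f_rep.
apply: (cvgr_to_le (series_rep_cnorm2_cvg (x := x) f_rep)).
near=> K; have N_le : (N <= K)%N by near: K; exact: nbhs_infty_ge.
rewrite /fourier_proj (@sumr_ord_widen_sub _ (fun k => fhat mu phi f k * phi k x)
  (fun k => lam k <= n%:R) N K) => [|k /lam_gt|//]; last by rewrite -ltNge.
rewrite (eq_bigl (fun k : 'I_K => n%:R < lam k)) => [|k]; last by rewrite ltNge.
apply: le_trans (cnorm2_sum_mul_le _ (fun k : 'I_K => fhat mu phi f k)
  (fun k : 'I_K => phi k x) (fun k _ => wgt_gt0 lam sigma k)) _.
apply: ler_pM.
- by apply: sumr_ge0 => k _; rewrite mulr_ge0 ?cnorm2_ge0 ?ltW ?wgt_gt0.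
- by apply: sumr_ge0 => k _; rewrite mulr_ge0 ?cnorm2_ge0 ?invr_ge0 ?ltW ?wgt_gt0.
- apply: (sum_ord_le_limn _ (fun k => n%:R < lam k) K H_cvg) => k.
  by rewrite mulr_ge0 ?cnorm2_ge0 ?ltW ?wgt_gt0.
- exact: sum_le_tail_sum.
Unshelve. all: by end_near.
Qed.

End TailSums.

Lemma lsq_line_min_le (R : realType) I (r : seq I) (w : I -> R) (e h : I -> R[i]) :
  (forall i, 0 <= w i) ->
  (forall t : R, \sum_(i <- r) cnorm2 (e i) * w i <=
                 \sum_(i <- r) cnorm2 (e i - t%:C%C * h i) * w i) ->
  \sum_(i <- r) cnorm2 (h i) * w i <= \sum_(i <- r) cnorm2 (e i - h i) * w i.
Proof.
move=> w_ge0 e_min.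
set D := \sum_(i <- r) cnorm2 (e i) * w i.
set b := \sum_(i <- r) complex.Re (e i * (h i)^*)%C * w i.
set c := \sum_(i <- r) cnorm2 (h i) * w i.
have sumE t : \sum_(i <- r) cnorm2 (e i - t%:C%C * h i) * w i = D - 2 * t * b + t ^+ 2 * c.
  rewrite /D /b /c !mulr_sumr -sumrB -big_split /=; apply: eq_bigr => i _.
  by rewrite cnorm2_subZ; ring.
have D_ge0 : 0 <= D by apply: sumr_ge0 => i _; rewrite mulr_ge0 ?cnorm2_ge0.
have c_ge0 : 0 <= c by apply: sumr_ge0 => i _; rewrite mulr_ge0 ?cnorm2_ge0.
have {}e_min t : D <= D - 2 * t * b + t ^+ 2 * c by rewrite -sumE; exact: e_min.
have b0 : b = 0.
  (* [t |-> c t^2 - 2 b t] is nonnegative; its discriminant forces [b = 0] *)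
  have : b ^+ 2 <= c * 0.
    apply: discriminant_le c_ge0 _ => t.
    by have := e_min t; lra.
  by rewrite mulr0 => b2_le0; apply/eqP; rewrite -sqrf_eq0 eq_le b2_le0 sqr_ge0.
have := sumE 1; rewrite b0 mulr0 subr0 expr1n mul1r.
rewrite [X in _ <= X](eq_bigr (fun i => cnorm2 (e i - 1%:C%C * h i) * w i)) => [->|i _].
  by rewrite lerDr.
by rewrite mul1r.
Qed.

Section MarcinkiewiczZygmund.
Variables (R : realType) (M : ptopologicalType) (mu : probability (Borel M) R).
Variables (phi : nat -> M -> R[i]) (lam : nat -> R).
Variables (L : nat -> nat) (X : nat -> nat -> M) (tau : nat -> nat -> R) (A B : R).
Hypotheses (phi_ONB : ONB mu phi) (X_MZ : is_MZ mu phi lam L X tau A B).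

Lemma MZ_sum_tau n : lam 0%N <= n%:R -> A <= \sum_(k < L n) tau n k <= B.
Proof.
move=> lam0_le; case: X_MZ => _ _ _ /(_ n (phi 0%N)).
have phi0_inP : inP phi lam n (phi 0%N).
  by exists 1%N, (fun _ => 1) => x; rewrite big_mkcond big_ord1 /= lam0_le mul1r.
rewrite sqr_norm2 inner_phi // eqxx /= !mulr1 => /(_ phi0_inP).
case: phi_ONB => _ _ _ phi0_1.
by under eq_bigr do rewrite phi0_1 cnorm21 mul1r.
Qed.

Lemma MZ_kappa_ge1 : 0 <= lam 0%N -> 1 <= B / A.
Proof.
move=> /archi_boundP/ltW/MZ_sum_tau/andP[A_le le_B]; have [A_gt0 _ _ _] := X_MZ.
by rewrite ler_pdivlMr // mul1r (le_trans A_le le_B).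
Qed.

Lemma lsq_dist_le n f p q (S : R) :
  {homo lam : j k / (j <= k)%N >-> j <= k} ->
  is_lsq phi lam L X tau n f p -> inP phi lam n q ->
  (forall x, cnorm2 (f x - q x) <= S) ->
  norm2 mu (fun x => q x - p x) ^+ 2 <= B / A * S.
Proof.
move=> lam_mono [p_inP p_min] q_inP fq_le.
have [A_gt0 B_gt0 tau_gt0 MZ_ineq] := X_MZ.
have S_ge0 : 0 <= S := le_trans (cnorm2_ge0 _) (fq_le point).
have qp_inP := inP_sub q_inP p_inP.
have [lam0_le|lam0_gt] := leP (lam 0%N) n%:R; last first.
  rewrite (congr1 (norm2 mu) (inP_eq0 lam_mono lam0_gt qp_inP)).
  apply: (@le_trans _ _ 0); last by rewrite mulr_ge0 // divr_ge0 // ltW.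
  by apply: sqr_norm2_le (L2_cst mu 0) _ => x; rewrite cnorm20.
have /andP[_ tau_le] := MZ_sum_tau lam0_le.
have qp_sum_le : \sum_(k < L n) cnorm2 (q (X n k) - p (X n k)) * tau n k
                 <= \sum_(k < L n) cnorm2 (f (X n k) - q (X n k)) * tau n k.
  rewrite [leRHS](eq_bigr (fun k : 'I_(L n) =>
    cnorm2 (f (X n k) - p (X n k) - (q (X n k) - p (X n k))) * tau n k)) => [|k _]; last first.
    by congr (cnorm2 _ * _); ring.
  apply: lsq_line_min_le => [k|t]; first exact: ltW (tau_gt0 _ _ (ltn_ord k)).
  have := p_min _ (inP_lincomb (1 - t%:C%C) t%:C%C p_inP q_inP).
  rewrite /sq_err [leRHS](eq_bigr (fun k : 'I_(L n) => cnorm2 (f (X n k) - p (X n k)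
    - t%:C%C * (q (X n k) - p (X n k))) * tau n k)) // => k _.
  by congr (cnorm2 _ * _); ring.
have fq_sum_le : \sum_(k < L n) cnorm2 (f (X n k) - q (X n k)) * tau n k <= S * B.
  apply: le_trans (ler_wpM2l S_ge0 tau_le); rewrite mulr_sumr ler_sum // => k _.
  by rewrite ler_pM2r ?fq_le ?tau_gt0.
rewrite mulrAC ler_pdivlMr // mulrC [B * S]mulrC.
have /andP[MZ_lower _] := MZ_ineq n _ qp_inP.
exact: le_trans MZ_lower (le_trans qp_sum_le fq_sum_le).
Qed.

End MarcinkiewiczZygmund.

Theorem theorem3p3 (R : realType) (M : ptopologicalType)
  (mu : probability (Borel M) R) (phi : nat -> M -> R[i]) (lam : nat -> R)
  (sigma_crit : R)
  (L : nat -> nat) (X : nat -> nat -> M) (tau : nat -> nat -> R) (A B : R)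
  (sigma : R) (f : M -> R[i]) (n : nat) (p : M -> R[i]) :
  compact [set: M] ->
  ONB mu phi ->
  eigen_ok lam ->
  (forall s, sigma_crit < s -> Csig_finite phi lam s) ->
  is_MZ mu phi lam L X tau A B ->
  sigma_crit < sigma ->
  inH mu phi lam sigma f ->
  series_rep mu phi f ->
  is_lsq phi lam L X tau n f p ->
  norm2 mu (fun x => f x - p x)
    <= Num.sqrt (1 + (B / A) ^+ 2) * Hnorm mu phi lam sigma f
       * phi_sigma phi lam sigma n.
Proof.
move=> _ phi_ONB [lam_mono lam_ge0 lam_oo] Csig X_MZ sigma_gt [f_L2 H_cvg] f_rep p_lsq.
have [C phi_sum_le] := Csig sigma sigma_gt.
move/cvgryPgt: lam_oo => /(_ n%:R)[N _ lam_gt].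
have H_ge0 : 0 <= limn (Hseries mu phi lam sigma f).
  by apply: limn_series_ge0 H_cvg => k; rewrite mulr_ge0 ?cnorm2_ge0 ?ltW ?wgt_gt0.
set q := fourier_proj mu phi lam N n f.
set S := limn (Hseries mu phi lam sigma f) * phi_sigma phi lam sigma n ^+ 2.
have fq_le x : cnorm2 (f x - q x) <= S.
  apply: le_trans (fourier_tail_bound phi_sum_le x lam_gt H_cvg f_rep) _.
  by rewrite /S ler_wpM2l // (tail_sum_le_phi_sigma n phi_sum_le x).
have q_inP := fourier_proj_inP mu phi lam N n f.
have [q_L2 p_L2] := (inP_L2 phi_ONB q_inP, inP_L2 phi_ONB p_lsq.1).
have kappa_ge1 := MZ_kappa_ge1 phi_ONB X_MZ (lam_ge0 0%N).
(* [lsq_dist_le] gives the factor [B / A]; the stated [(B / A) ^+ 2] is weaker as [A <= B]. *)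
have fp_le : norm2 mu (fun x => f x - p x) ^+ 2 <= (1 + (B / A) ^+ 2) * S.
  rewrite (Pythagoras_sub f_L2 q_L2 p_L2); last exact: fourier_proj_orth (inP_sub q_inP p_lsq.1).
  rewrite mulrDl mul1r lerD //; first exact: sqr_norm2_le (L2B f_L2 q_L2) fq_le.
  apply: le_trans (lsq_dist_le phi_ONB X_MZ lam_mono p_lsq q_inP fq_le) _.
  apply: ler_wpM2r; first by rewrite mulr_ge0 ?sqr_ge0.
  by rewrite expr2 ler_peMl // (le_trans ler01).
apply: ler_sqrtM_of_sqr fp_le; rewrite ?norm2_ge0 ?addr_ge0 ?sqr_ge0 //.
exact: phi_sigma_ge0 n phi_sum_le.
Qed.
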